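(* Let $N\ge 1$, let $\lambda_0,\dots,\lambda_N>0$ be positive real numbers and let $\gamma_0,\dots,\gamma_N\in\mathbb{C}$ be distinct complex numbers. Let $S\subset \mathbb{P}^1\times\mathbb{P}^1$ be the curve of bidegree $(N,N)$ defined in affine coordinates $(\eta,\zeta)$ by $$p(\eta,\zeta)=\sum_{i=0}^N \lambda_i^2\prod_{\substack{j=0\\ j\neq i}}^N(\zeta-\gamma_j)(1+\eta\bar\gamma_j)=0 .$$ Let $s$ be the global meromorphic section of the line bundle $\mathcal{O}(N+1,-N-1)$ on $\mathbb{P}^1\times\mathbb{P}^1$ given in affine coordinates by $$s(\eta,\zeta)=\frac{\prod_{i=0}^N(\zeta-\gamma_i)}{\prod_{i=0}^N(1+\eta\bar\gamma_i)} .$$ Then the restriction of $s$ to $S$ is non-vanishing, i.e. it is a holomorphic section of $\mathcal{O}(N+1,-N-1)|_S$ with no zeros (and no poles) on $S$.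
   Context: $\mathbb{P}^1\times\mathbb{P}^1$ has affine coordinates $(\eta,\zeta)$; $\mathcal{O}(a,b)$ denotes the line bundle $\pi_1^*\mathcal{O}(a)\otimes\pi_2^*\mathcal{O}(b)$, where $\pi_1$ is projection to the $\eta$-factor and $\pi_2$ to the $\zeta$-factor. The data $(\lambda_i,\gamma_i)$ are called JNR data and $S$ is the JNR spectral curve. *)

From HB Require Import structures.
From mathcomp Require Import all_boot all_order all_algebra.
From mathcomp Require Import complex.
From mathcomp Require Import reals.
From mathcomp Require Import mpoly.
Set Implicit Arguments. Unset Strict Implicit. Unset Printing Implicit Defensive.
Import Order.TTheory GRing.Theory Num.Theory.
Local Open Scope ring_scope.

(* The complex numbers are R[i] for R : realType (R is, up to isomorphism,
   the field of real numbers).  Points of P^1 x P^1 are given by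
   bihomogeneous coordinates v : 'I_4 -> C with
     v 0 = eta0, v 1 = eta1  (eta  = eta1/eta0 the affine coordinate),
     v 2 = zeta0, v 3 = zeta1 (zeta = zeta1/zeta0 the affine coordinate). *)
Definition ieta0 : 'I_4 := @Ordinal 4 0 isT.
Definition ieta1 : 'I_4 := @Ordinal 4 1 isT.
Definition izeta0 : 'I_4 := @Ordinal 4 2 isT.
Definition izeta1 : 'I_4 := @Ordinal 4 3 isT.

Section JNR.
Variable R : realType.
Local Notation C := (R[i]).

(* homogenised factors  (1 + eta conj(g))  and  (zeta - g) *)
Definition etaFactor (g : C) : {mpoly C[4]} :=
  'X_ieta0 + (g^*)%:MP * 'X_ieta1.
Definition zetaFactor (g : C) : {mpoly C[4]} :=
  'X_izeta1 - g%:MP * 'X_izeta0.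

Definition JNR_curve (N : nat) (lam : 'I_N.+1 -> R) (gam : 'I_N.+1 -> C)
  : {mpoly C[4]} :=
  \sum_(i < N.+1) (((lam i ^+ 2)%:C)%C)%:MP *
     \prod_(j < N.+1 | j != i) (zetaFactor (gam j) * etaFactor (gam j)).

Definition s_num (N : nat) (gam : 'I_N.+1 -> C) : {mpoly C[4]} :=
  \prod_(i < N.+1) zetaFactor (gam i).
Definition s_den (N : nat) (gam : 'I_N.+1 -> C) : {mpoly C[4]} :=
  \prod_(i < N.+1) etaFactor (gam i).

End JNR.

Definition bihomog (K : nzRingType) (a b : nat) (p : {mpoly K[4]}) : Prop :=
  forall m, m \in msupp p ->
    (m ieta0 + m ieta1 = a)%N /\ (m izeta0 + m izeta1 = b)%N.

Definition P1xP1_point (K : nzRingType) (v : 'I_4 -> K) : Prop :=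
  (v ieta0 != 0 \/ v ieta1 != 0) /\ (v izeta0 != 0 \/ v izeta1 != 0).

(* The meromorphic section  s = num/den  (num of bidegree (0,N+1), den of
   bidegree (N+1,0)) restricts to a holomorphic nowhere-vanishing section on
   the curve S = {P = 0}: at every point v of S, s coincides on S (i.e. modulo
   the equation P) with a quotient F/G of bihomogeneous forms of the right
   bidegree that are both nonzero at v, i.e.  num * G - den * F = Q * P. *)
Definition restriction_nonvanishing (K : fieldType) (N : nat)
  (P num den : {mpoly K[4]}) : Prop :=
  forall v : 'I_4 -> K, P1xP1_point v -> P.@[v] = 0 ->
    exists (F G Q : {mpoly K[4]}) (d1 d2 e1 e2 : nat),
      [/\ bihomog e1 e2 F, bihomog d1 d2 G,
          (e1 + N.+1 = d1)%N & (d2 + N.+1 = e2)%N] /\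
      [/\ num * G - den * F = Q * P,
          F.@[v] != 0 & G.@[v] != 0].

From HB Require Import structures.
From mathcomp Require Import all_boot all_order all_algebra.
From mathcomp Require Import complex reals mpoly.
From mathcomp Require Import zify ring.
Set Implicit Arguments. Unset Strict Implicit. Unset Printing Implicit Defensive.
Import Order.TTheory GRing.Theory Num.Theory.
Local Open Scope ring_scope.

(* Write T_j = (zeta - g_j)(1 + eta g_j^* ), so that the curve is
   P = sum_i lam_i^2 prod_(j != i) T_j.  Distinct g_j have distinct zeros, so at
   a point of S at most one zeta-factor and one eta-factor vanish; if some T_k
   vanishes, P = 0 forces a second T_m to vanish.  Either s = num/den has no
   zero and no pole there, or zeta - g_k and 1 + eta g_m^* both vanish with
   k != m.  In the latter case splitting off the terms i = k, m gives
   P = (1 + eta g_m^* ) B + (zeta - g_k) C with B, C nonzero at the point, so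
   on S the quotient (zeta - g_k) / (1 + eta g_m^* ) equals -B / C. *)

Section CofactorSum.
Variables (R : comPzRingType) (I : finType) (c T : I -> R).

Definition cofactor_sum (A : {set I}) : R :=
  \sum_(i in A) c i * \prod_(j in A :\ i) T j.

Lemma cofactor_sumD1 (A : {set I}) (k : I) : k \in A ->
  cofactor_sum A = c k * \prod_(j in A :\ k) T j + T k * cofactor_sum (A :\ k).
Proof.
move=> kA; rewrite /cofactor_sum (big_setD1 k kA) mulr_sumr; congr (_ + _).
apply: eq_bigr => i; rewrite in_setD1 => /andP [ik iA].
rewrite (big_setD1 k) ?in_setD1 1?eq_sym ?ik //= mulrCA.
by congr (_ * (_ * _)); apply: eq_bigl => j; rewrite !in_setD1 andbCA.
Qed.

Lemma rmorph_cofactor_sum_root (S : pzRingType) (f : {rmorphism R -> S})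
    (A : {set I}) (k : I) :
  k \in A -> f (T k) = 0 ->
  f (cofactor_sum A) = f (c k) * \prod_(j in A :\ k) f (T j).
Proof.
move=> kA Tk0; rewrite (cofactor_sumD1 kA) rmorphD !rmorphM Tk0 mul0r addr0.
by rewrite rmorph_prod.
Qed.

End CofactorSum.

Arguments cofactor_sumD1 {R I c T A k}.
Arguments rmorph_cofactor_sum_root {R I c T S f A k}.

Section Bihomogeneous.
Variable K : comNzRingType.
Implicit Types (p q : {mpoly K[4]}) (a b : nat).

Lemma bihomog0 a b : bihomog a b (0 : {mpoly K[4]}).
Proof. by move=> m; rewrite msupp0. Qed.

Lemma bihomogC (x : K) : bihomog 0 0 x%:MP.
Proof.
by move=> m; rewrite msuppC; case: eqP => // _; rewrite inE => /eqP ->; rewrite !mnm0E.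
Qed.

Lemma bihomogX (i : 'I_4) :
  bihomog ((i == ieta0) + (i == ieta1)) ((i == izeta0) + (i == izeta1))
    ('X_i : {mpoly K[4]}).
Proof. by move=> m; rewrite msuppX inE => /eqP ->; rewrite !mnm1E. Qed.

Lemma bihomogD a b p q : bihomog a b p -> bihomog a b q -> bihomog a b (p + q).
Proof. by move=> hp hq m /msuppD_le; rewrite mem_cat => /orP [/hp|/hq]. Qed.

Lemma bihomogN a b p : bihomog a b p -> bihomog a b (- p).
Proof. by move=> hp m; rewrite (perm_mem (msuppN p)) => /hp. Qed.

Lemma bihomogB a b p q : bihomog a b p -> bihomog a b q -> bihomog a b (p - q).
Proof. by move=> hp hq; apply: bihomogD hp (bihomogN hq). Qed.

Lemma bihomogM a b a' b' p q :
  bihomog a b p -> bihomog a' b' q -> bihomog (a + a') (b + b') (p * q).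
Proof.
move=> hp hq m /msuppM_le /allpairsP [[m1 m2] /= [/hp [e1 e2] /hq [e3 e4] ->]].
by rewrite !mnmDE; split; lia.
Qed.

Lemma bihomog_sum (I : finType) (A : {pred I}) a b (f : I -> {mpoly K[4]}) :
  (forall i, i \in A -> bihomog a b (f i)) -> bihomog a b (\sum_(i in A) f i).
Proof.
move=> hf; elim/big_rec: _ => [|i p iA hp]; first exact: bihomog0.
exact: bihomogD (hf i iA) hp.
Qed.

Lemma bihomog_prod (I : finType) (A : {pred I}) a b (f : I -> {mpoly K[4]}) :
  (forall i, i \in A -> bihomog a b (f i)) ->
  bihomog (a * #|A|) (b * #|A|) (\prod_(i in A) f i).
Proof.
move=> hf; rewrite cardE -big_enum.
have : {subset enum A <= A} by move=> i; rewrite mem_enum.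
elim: (enum A) => [|i s IHs] sA.
  by rewrite big_nil !muln0 -mpolyC1; apply: bihomogC.
rewrite big_cons /= !mulnS; apply: bihomogM.
  by apply/hf/sA; rewrite inE eqxx.
by apply: IHs => j js; apply: sA; rewrite inE js orbT.
Qed.

Lemma bihomog_cofactor_sum (I : finType) (c T : I -> {mpoly K[4]}) (A : {set I})
    n :
  (forall i, bihomog 0 0 (c i)) -> (forall i, bihomog 1 1 (T i)) ->
  #|A| = n.+1 -> bihomog n n (cofactor_sum c T A).
Proof.
move=> hc hT cardA; apply: bihomog_sum => i iA.
have cardAi : #|A :\ i| = n by move: cardA; rewrite (cardsD1 i) iA => -[].
have := bihomogM (hc i) (bihomog_prod (fun j (_ : j \in A :\ i) => hT j)).
by rewrite cardAi !mul1n.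
Qed.

End Bihomogeneous.

Arguments bihomogC {K} x.
Arguments bihomogX {K} i.

Definition nonvanishing_at (K : fieldType) (N : nat) (P num den : {mpoly K[4]})
    (v : 'I_4 -> K) : Prop :=
  exists (F G Q : {mpoly K[4]}) (d1 d2 e1 e2 : nat),
    [/\ bihomog e1 e2 F, bihomog d1 d2 G,
        (e1 + N.+1 = d1)%N & (d2 + N.+1 = e2)%N] /\
    [/\ num * G - den * F = Q * P, F.@[v] != 0 & G.@[v] != 0].

Section NonvanishingAt.
Variables (K : fieldType) (N : nat) (P num den : {mpoly K[4]}) (v : 'I_4 -> K).

Lemma nonvanishing_at_regular :
  bihomog 0 N.+1 num -> bihomog N.+1 0 den ->
  num.@[v] != 0 -> den.@[v] != 0 -> nonvanishing_at N P num den v.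
Proof.
move=> hnum hden num_v den_v; exists num, den, 0, N.+1, 0, 0, N.+1.
by split; split => //; rewrite mulrC subrr mul0r.
Qed.

(* On [P = 0] the quotient [z / e] equals [- B / C], so [num / den] is
   represented there by [- B n / (C d)]. *)
Lemma nonvanishing_at_split (z e n d B C : {mpoly K[4]}) a b :
  P = e * B + z * C -> num = z * n -> den = e * d ->
  bihomog 0 N n -> bihomog N 0 d -> bihomog a b.+1 B -> bihomog a.+1 b C ->
  n.@[v] != 0 -> d.@[v] != 0 -> B.@[v] != 0 -> C.@[v] != 0 ->
  nonvanishing_at N P num den v.
Proof.
move=> -> -> -> hn hd hB hC n_v d_v B_v C_v.
exists (- B * n), (C * d), (n * d), (a.+1 + N), b, a, (b.+1 + N); split.
  split; try lia.
  - by have := bihomogM (bihomogN hB) hn; rewrite addn0.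
  - by have := bihomogM hC hd; rewrite addn0.
split; first by ring.
  by rewrite mevalM mevalN mulNr oppr_eq0 mulf_neq0.
by rewrite mevalM mulf_neq0.
Qed.

End NonvanishingAt.

Section Factors.
Variable R : realType.
Implicit Types (g h : R[i]) (v : 'I_4 -> R[i]).

Lemma zetaFactorE g v : (zetaFactor g).@[v] = v izeta1 - g * v izeta0.
Proof. by rewrite /zetaFactor mevalB mevalM mevalC !mevalXU. Qed.

Lemma etaFactorE g v : (etaFactor g).@[v] = v ieta0 + g^* * v ieta1.
Proof. by rewrite /etaFactor mevalD mevalM mevalC !mevalXU. Qed.

Lemma bihomog_zetaFactor g : bihomog 0 1 (zetaFactor g).
Proof.
exact: bihomogB (bihomogX izeta1 : bihomog 0 1 _)
                (bihomogM (bihomogC g) (bihomogX izeta0) : bihomog 0 1 _).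
Qed.

Lemma bihomog_etaFactor g : bihomog 1 0 (etaFactor g).
Proof.
exact: bihomogD (bihomogX ieta0 : bihomog 1 0 _)
                (bihomogM (bihomogC g^*) (bihomogX ieta1) : bihomog 1 0 _).
Qed.

Lemma zetaFactor_common_root v g h : P1xP1_point v ->
  (zetaFactor g).@[v] = 0 -> (zetaFactor h).@[v] = 0 -> g = h.
Proof.
move=> [_ v_zeta]; rewrite !zetaFactorE => hg hh.
have /eqP : (h - g) * v izeta0 = 0.
  by rewrite -[RHS](subr0 0) -{1}hg -hh; ring.
rewrite mulf_eq0 subr_eq0 => /orP [/eqP -> // | /eqP v0].
by move: hg; rewrite v0 mulr0 subr0 => v1; case: v_zeta; rewrite ?v0 ?v1 eqxx.
Qed.

Lemma etaFactor_common_root v g h : P1xP1_point v ->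
  (etaFactor g).@[v] = 0 -> (etaFactor h).@[v] = 0 -> g = h.
Proof.
move=> [v_eta _]; rewrite !etaFactorE => hg hh.
have /eqP : (g^* - h^*) * v ieta1 = 0.
  by rewrite -[RHS](subr0 0) -{1}hg -hh; ring.
rewrite mulf_eq0 subr_eq0 => /orP [/eqP /(can_inj conjCK) // | /eqP v1].
by move: hg; rewrite v1 mulr0 addr0 => v0; case: v_eta; rewrite ?v0 ?v1 eqxx.
Qed.

Lemma bihomog_prod_zetaFactor (I : finType) (g : I -> R[i]) (A : {pred I}) :
  bihomog 0 #|A| (\prod_(j in A) zetaFactor (g j)).
Proof.
have := bihomog_prod (fun j (_ : j \in A) => bihomog_zetaFactor (g := g j)).
by rewrite mul0n mul1n.
Qed.

Lemma bihomog_prod_etaFactor (I : finType) (g : I -> R[i]) (A : {pred I}) :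
  bihomog #|A| 0 (\prod_(j in A) etaFactor (g j)).
Proof.
have := bihomog_prod (fun j (_ : j \in A) => bihomog_etaFactor (g := g j)).
by rewrite mul0n mul1n.
Qed.

End Factors.

Section JNRCurve.
Variables (R : realType) (N : nat) (lam : 'I_N.+1 -> R) (gam : 'I_N.+1 -> R[i]).
Hypotheses (N_gt0 : (0 < N)%N) (lam_gt0 : forall i, 0 < lam i) (gam_inj : injective gam).

Local Notation Z j := (zetaFactor (gam j)).
Local Notation E j := (etaFactor (gam j)).

Definition curve_weight i : {mpoly R[i][4]} := ((lam i ^+ 2)%:C)%C%:MP.
Definition curve_factor j : {mpoly R[i][4]} := Z j * E j.

Lemma JNR_curve_cofactor :
  JNR_curve lam gam = cofactor_sum curve_weight curve_factor [set: 'I_N.+1].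
Proof.
apply: eq_big => [i | i _]; first by rewrite in_setT.
by congr (_ * _); apply: eq_bigl => j; rewrite in_setD1 in_setT andbT.
Qed.

Lemma curve_factorE j v : (curve_factor j).@[v] = (Z j).@[v] * (E j).@[v].
Proof. exact: mevalM. Qed.

Lemma curve_weight_eval_neq0 i v : (curve_weight i).@[v] != 0.
Proof. by rewrite mevalC fmorph_eq0 expf_neq0 // lt0r_neq0. Qed.

Lemma bihomog_curve_weight i : bihomog 0 0 (curve_weight i).
Proof. exact: bihomogC. Qed.

Lemma bihomog_curve_factor j : bihomog 1 1 (curve_factor j).
Proof.
exact: (bihomogM (bihomog_zetaFactor (g := gam j)) (bihomog_etaFactor (g := gam j))
        : bihomog 1 1 _).
Qed.

Lemma card_setTD1 k : #|[set: 'I_N.+1] :\ k| = N.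
Proof. by have := cardsD1 k [set: 'I_N.+1]; rewrite cardsT card_ord in_setT => -[]. Qed.

Lemma card_setTD1D1 k m : m != k -> #|[set: 'I_N.+1] :\ k :\ m| = N.-1.
Proof.
move=> mk; have := cardsD1 m ([set: 'I_N.+1] :\ k).
by rewrite card_setTD1 in_setD1 mk in_setT add1n => /(congr1 predn) ->.
Qed.

Lemma s_numD1 k : s_num gam = Z k * \prod_(j in [set: 'I_N.+1] :\ k) Z j.
Proof.
rewrite /s_num (bigD1 k) //=; congr (_ * _).
by apply: eq_bigl => j; rewrite in_setD1 in_setT andbT.
Qed.

Lemma s_denD1 k : s_den gam = E k * \prod_(j in [set: 'I_N.+1] :\ k) E j.
Proof.
rewrite /s_den (bigD1 k) //=; congr (_ * _).
by apply: eq_bigl => j; rewrite in_setD1 in_setT andbT.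
Qed.

Lemma JNR_curve_split k m : m != k ->
  JNR_curve lam gam =
    E m * (curve_weight k * Z m * \prod_(j in [set: 'I_N.+1] :\ k :\ m) curve_factor j)
  + Z k * (E k * cofactor_sum curve_weight curve_factor ([set: 'I_N.+1] :\ k)).
Proof.
move=> mk; rewrite JNR_curve_cofactor (cofactor_sumD1 (in_setT k)).
by rewrite (big_setD1 m) ?in_setD1 ?mk //= /curve_factor; ring.
Qed.

Section AtPoint.
Variable v : 'I_4 -> R[i].
Hypothesis v_pt : P1xP1_point v.

Lemma zetaFactor_root_unique k j : (Z k).@[v] = 0 -> j != k -> (Z j).@[v] != 0.
Proof.
move=> Zk jk; apply/eqP => Zj.
by rewrite (gam_inj (zetaFactor_common_root v_pt Zj Zk)) eqxx in jk.
Qed.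

Lemma etaFactor_root_unique k j : (E k).@[v] = 0 -> j != k -> (E j).@[v] != 0.
Proof.
move=> Ek jk; apply/eqP => Ej.
by rewrite (gam_inj (etaFactor_common_root v_pt Ej Ek)) eqxx in jk.
Qed.

Lemma curve_factor_eval_neq0 k m j : (Z k).@[v] = 0 -> (E m).@[v] = 0 ->
  j != k -> j != m -> (curve_factor j).@[v] != 0.
Proof.
move=> Zk Em jk jm; rewrite curve_factorE mulf_neq0 //.
  exact: zetaFactor_root_unique Zk jk.
exact: etaFactor_root_unique Em jm.
Qed.

Lemma JNR_curve_root_pair k : (JNR_curve lam gam).@[v] = 0 ->
  (curve_factor k).@[v] = 0 -> exists2 j, j != k & (curve_factor j).@[v] = 0.
Proof.
move=> + Tk; rewrite JNR_curve_cofactor (rmorph_cofactor_sum_root (in_setT k) Tk).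
move/eqP; rewrite mulf_eq0 (negbTE (curve_weight_eval_neq0 _ _)) /=.
by move=> /prodf_eq0 [j]; rewrite in_setD1 => /andP [jk _] /eqP; exists j.
Qed.

Lemma JNR_curve_point_cases : (JNR_curve lam gam).@[v] = 0 ->
  ((s_num gam).@[v] != 0 /\ (s_den gam).@[v] != 0) \/
  exists k m, [/\ k != m, (Z k).@[v] = 0 & (E m).@[v] = 0].
Proof.
move=> Pv; have [/forallP T_v | /forallPn [k /negPn /eqP Tk]] :=
  boolP [forall j, (curve_factor j).@[v] != 0].
  left; rewrite /s_num /s_den !rmorph_prod; split; apply/prodf_neq0 => j _;
  by move: (T_v j); rewrite curve_factorE mulf_eq0 negb_or => /andP [].
right; have [j jk] := JNR_curve_root_pair Pv Tk.
move: Tk; rewrite !curve_factorE => /eqP; rewrite mulf_eq0 => /orP [] /eqP Tk /eqP;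
  rewrite mulf_eq0 => /orP [] /eqP Tj.
- by have := zetaFactor_root_unique Tk jk; rewrite Tj eqxx.
- by exists k, j; rewrite eq_sym.
- by exists j, k.
- by have := etaFactor_root_unique Tk jk; rewrite Tj eqxx.
Qed.

Lemma JNR_nonvanishing_at_split k m : k != m -> (Z k).@[v] = 0 -> (E m).@[v] = 0 ->
  nonvanishing_at N (JNR_curve lam gam) (s_num gam) (s_den gam) v.
Proof.
move=> km Zk Em; have mk : m != k by rewrite eq_sym.
set W := \prod_(j in [set: 'I_N.+1] :\ k :\ m) curve_factor j.
set Y := cofactor_sum curve_weight curve_factor ([set: 'I_N.+1] :\ k).
have W_hom : bihomog N.-1 N.-1 W.
  have := bihomog_prod
    (fun j (_ : j \in [set: 'I_N.+1] :\ k :\ m) => bihomog_curve_factor (j := j)).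
  by rewrite card_setTD1D1 // mul1n.
have Y_hom : bihomog N.-1 N.-1 Y.
  apply: bihomog_cofactor_sum; [exact: bihomog_curve_weight | exact: bihomog_curve_factor |].
  by rewrite card_setTD1 prednK.
have W_v : W.@[v] != 0.
  rewrite rmorph_prod; apply/prodf_neq0 => j; rewrite !in_setD1 => /and3P [jm jk _].
  exact: curve_factor_eval_neq0 Zk Em jk jm.
have Y_v : Y.@[v] = (curve_weight m).@[v] * W.@[v].
  have mDk : m \in [set: 'I_N.+1] :\ k by rewrite in_setD1 mk in_setT.
  have Tm : (curve_factor m).@[v] = 0 by rewrite curve_factorE Em mulr0.
  by rewrite (rmorph_cofactor_sum_root mDk Tm) /W rmorph_prod.
apply: (nonvanishing_at_split (a := N.-1) (b := N.-1) (JNR_curve_split mk)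
                              (s_numD1 k) (s_denD1 m)).
- have := bihomog_prod_zetaFactor (g := gam) (A := [set: 'I_N.+1] :\ k).
  by rewrite card_setTD1.
- have := bihomog_prod_etaFactor (g := gam) (A := [set: 'I_N.+1] :\ m).
  by rewrite card_setTD1.
- have := bihomogM (bihomog_curve_weight (i := k)) (bihomog_zetaFactor (g := gam m)).
  by move/bihomogM/(_ W_hom); rewrite add0n add1n.
- by have := bihomogM (bihomog_etaFactor (g := gam k)) Y_hom; rewrite add0n add1n.
- rewrite rmorph_prod; apply/prodf_neq0 => j; rewrite in_setD1 => /andP [jk _].
  exact: zetaFactor_root_unique Zk jk.
- rewrite rmorph_prod; apply/prodf_neq0 => j; rewrite in_setD1 => /andP [jm _].
  exact: etaFactor_root_unique Em jm.
- by rewrite !mevalM !mulf_neq0 ?curve_weight_eval_neq0 ?(zetaFactor_root_unique Zk mk).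
- by rewrite mevalM Y_v !mulf_neq0 ?curve_weight_eval_neq0 ?(etaFactor_root_unique Em km).
Qed.

End AtPoint.
End JNRCurve.

Theorem mainTheorem1 (R : realType) (N : nat) (lam : 'I_N.+1 -> R)
    (gam : 'I_N.+1 -> R[i]) :
  (1 <= N)%N ->
  (forall i, 0 < lam i) ->
  injective gam ->
  restriction_nonvanishing N (JNR_curve lam gam) (s_num gam) (s_den gam).
Proof.
move=> N_gt0 lam_gt0 gam_inj v v_pt Pv.
have [[num_v den_v] | [k [m [km Zk Em]]]] :=
  JNR_curve_point_cases lam_gt0 gam_inj v_pt Pv.
  apply: nonvanishing_at_regular num_v den_v.
    by have := bihomog_prod_zetaFactor (g := gam) (A := 'I_N.+1); rewrite card_ord.
  by have := bihomog_prod_etaFactor (g := gam) (A := 'I_N.+1); rewrite card_ord.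
exact: (JNR_nonvanishing_at_split N_gt0 lam_gt0 gam_inj v_pt km Zk Em).
Qed.
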